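(* Let $R$ be a commutative unital ring, $A$ a unital associative $R$-algebra and $M$ an $(A,A)$-bimodule. Then there are isomorphisms of cochain complexes of $R$-modules \[(C^*_\mu({\tt I}_n;A,M),d)\cong(\widehat C^*_{\rm Chrom}({\tt I}_n;A,M),\widehat{\tt d})\cong(C^*_{\rm Chrom}({\tt I}_n;A,M),{\tt d})\] and \[(C^*_\mu({\tt P}_n;A,M),d)\oplus(M[n+1],0)\cong(\widehat C^*_{\rm Chrom}({\tt P}_n;A,M),\widehat{\tt d}),\] where $(M[n+1],0)$ is the complex consisting of a single copy of $M$ in degree $n+1$.
   Context: ${\tt I}_n$ is the digraph with vertices $v_0,\dots,v_n$ and edges $(v_{i-1},v_i)$, $1\le i\le n$; ${\tt P}_n$ has vertices $v_0,\dots,v_n$ and edges $(v_i,v_{i+1})$, $0\le i<n$, and $(v_n,v_0)$. For ${\tt G}\in\{{\tt I}_n,{\tt P}_n\}$ and a spanning subgraph ${\tt H}$ (all vertices, subset of edges) with connected components $c_0<\dots<c_k$ ordered by minimal vertex (so $v_0\in c_0$), set $\mathcal F({\tt H})=M\otimes_R A^{\otimes_R k}$. For ${\tt H}\prec{\tt H}'={\tt H}\cup e$ (adding one edge): if $e$ joins distinct components $c_s\ni s(e)$ and $c_t\ni t(e)$, the map replaces the factors $a_s,a_t$ by $a_s\cdot a_t$ at position $\min(s,t)$ (the position of the merged component), other factors unchanged; if both endpoints of $e$ lie in one component (only possible when ${\tt H}'={\tt P}_n$), the map ${\tt d}_{{\tt H}\prec{\tt H}'}$ is the identity $M\to M$ while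 $\widehat{\tt d}_{{\tt H}\prec{\tt H}'}$ is zero. With a fixed edge order and $\zeta({\tt H},{\tt H}\cup e)$ = number of edges of ${\tt H}$ preceding $e$ mod 2: $C^i_{\rm Chrom}=\widehat C^i_{\rm Chrom}=\bigoplus_{\#E({\tt H})=i}\mathcal F({\tt H})$ over all spanning subgraphs, with differentials ${\tt d}=\sum(-1)^\zeta{\tt d}_{{\tt H}\prec{\tt H}'}$ and $\widehat{\tt d}=\sum(-1)^\zeta\widehat{\tt d}_{{\tt H}\prec{\tt H}'}$ (chromatic complexes of Helme-Guizon–Rong and Przytycki, in their orientation-dependent form). The multipath complex $C^i_\mu({\tt G};A,M)$ is the sum of $\mathcal F({\tt H})$ over multipaths ${\tt H}$ (spanning subgraphs whose components are isolated vertices or simple directed paths; for ${\tt I}_n$ all spanning subgraphs, for ${\tt P}_n$ all except ${\tt P}_n$) with $i$ edges and the same covering maps and signs (any sign assignment gives an isomorphic complex). *)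

From HB Require Import structures.
From mathcomp Require Import all_boot all_order all_algebra.
Set Implicit Arguments.
Unset Strict Implicit.
Unset Printing Implicit Defensive.
Import Order.TTheory GRing.Theory Num.Theory.
Local Open Scope ring_scope.

Section Defs.
Variables (R : comPzRingType) (A : algType R) (M : lmodType R).

Definition rlinear (U V : lmodType R) (f : U -> V) : Prop :=
  forall (r : R) (x y : U), f (r *: x + y) = r *: f x + f y.

Definition is_bimodule (la : A -> M -> M) (ra : M -> A -> M) : Prop :=
  (forall (r : R) a b m, la (r *: a + b) m = r *: la a m + la b m) /\
  (forall (r : R) a m m', la a (r *: m + m') = r *: la a m + la a m') /\
  (forall (r : R) m m' a, ra (r *: m + m') a = r *: ra m a + ra m' a) /\
  (forall (r : R) m a b, ra m (r *: a + b) = r *: ra m a + ra m b) /\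
  (forall a b m, la (a * b) m = la a (la b m)) /\
  (forall m a b, ra m (a * b) = ra (ra m a) b) /\
  (forall a m b, la a (ra m b) = ra (la a m) b) /\
  (forall m, la 1 m = m) /\ (forall m, ra m 1 = m).

Definition multilinear (N : lmodType R) (k : nat) (phi : M -> seq A -> N) : Prop :=
  (forall a, size a = k -> forall (r : R) m1 m2,
      phi (r *: m1 + m2) a = r *: phi m1 a + phi m2 a) /\
  (forall m a j, size a = k -> (j < k)%N -> forall (r : R) x y,
      phi m (set_nth 0 a j (r *: x + y))
      = r *: phi m (set_nth 0 a j x) + phi m (set_nth 0 a j y)).

(* The modules M (x)_R A^(x)_R k, k : nat, with their pure tensors
   m (x) a_1 (x) ... (x) a_k and a lifting operation for multilinear maps. *)
Record tensor_powers := TensorPowers {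
  tp : nat -> lmodType R;
  tp_pure : forall k, M -> seq A -> tp k;
  tp_lift : forall (k : nat) (N : lmodType R), (M -> seq A -> N) -> tp k -> N }.

Definition is_tensor_powers (T : tensor_powers) : Prop :=
  forall k : nat,
    multilinear k (@tp_pure T k) /\
    (forall (N : lmodType R) (phi : M -> seq A -> N), multilinear k phi ->
       rlinear (@tp_lift T k _ phi) /\
       (forall m a, size a = k -> @tp_lift T k _ phi (@tp_pure T k m a) = phi m a)) /\
    (forall (N : lmodType R) (f g : tp T k -> N), rlinear f -> rlinear g ->
       (forall m a, size a = k -> f (@tp_pure T k m a) = g (@tp_pure T k m a)) ->
       f = g).

Record complex := Complex {
  ctype : Type;
  czero : ctype;
  cadd : ctype -> ctype -> ctype;
  cscale : R -> ctype -> ctype;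
  cmem : nat -> ctype -> Prop;
  cdiff : ctype -> ctype }.        (* the differential, C^i -> C^(i+1) *)

Definition cplx_iso (C D : complex) : Prop :=
  exists phi : nat -> ctype C -> ctype D, forall i : nat,
    (forall x, @cmem C i x -> @cmem D i (phi i x)) /\
    (forall x y, @cmem C i x -> @cmem C i y ->
       phi i (cadd x y) = cadd (phi i x) (phi i y)) /\
    (forall (r : R) x, @cmem C i x -> phi i (cscale r x) = cscale r (phi i x)) /\
    (forall x y, @cmem C i x -> @cmem C i y -> phi i x = phi i y -> x = y) /\
    (forall y, @cmem D i y -> exists2 x, @cmem C i x & phi i x = y) /\
    (forall x, @cmem C i x -> phi i.+1 (cdiff x) = cdiff (phi i x)).

Definition csum (C D : complex) : complex :=
  @Complex (ctype C * ctype D)%type (czero C, czero D)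
    (fun x y => (cadd x.1 y.1, cadd x.2 y.2))
    (fun r x => (cscale r x.1, cscale r x.2))
    (fun i x => @cmem C i x.1 /\ @cmem D i x.2)
    (fun x => (cdiff x.1, cdiff x.2)).

(* the complex (M[j], 0): a single copy of M in degree j, zero differential *)
Definition conc (j : nat) : complex :=
  @Complex M 0 +%R ( *:%R) (fun i m => i <> j -> m = 0) (fun _ => 0).

Variables (nv ne : nat) (src tgt : 'I_ne -> 'I_nv).

Definition adj (H : {set 'I_ne}) : rel 'I_nv := fun x y =>
  [exists e in H, ((src e == x) && (tgt e == y)) || ((src e == y) && (tgt e == x))].
Definition conn (H : {set 'I_ne}) : rel 'I_nv := connect (adj H).
Definition isroot (H : {set 'I_ne}) (v : 'I_nv) : bool :=
  [forall u, conn H u v ==> (v <= u)%N].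
Definition ncomp (H : {set 'I_ne}) : nat := #|[set v | isroot H v]|.
(* index of the component of v, components ordered by minimal vertex *)
Definition cidx (H : {set 'I_ne}) (v : 'I_nv) : nat :=
  #|[set w | isroot H w & [forall u, conn H u v ==> (w < u)%N]]|.
(* number of A-factors: F(H) = M (x) A^(x) k with k+1 components *)
Definition kdeg (H : {set 'I_ne}) : nat := (ncomp H).-1.

(* multipaths: every component is an isolated vertex or a simple directed path,
   i.e. in/out-degrees at most 1 and no (undirected) cycle *)
Definition multipath (H : {set 'I_ne}) : bool :=
  [&& [forall v, #|[set e in H | src e == v]| <= 1]%N,
      [forall v, #|[set e in H | tgt e == v]| <= 1]%N &
      (#|H| + ncomp H == nv)%N].

Definition rem_at (a : seq A) (j : nat) : seq A := take j a ++ drop j.+1 a.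

Variables (la : A -> M -> M) (ra : M -> A -> M).

(* merge factors s and t (factor 0 is M, factor j >= 1 is the (j-1)-th entry of a)
   into a_s * a_t placed at position min(s,t) *)
Definition merge (m : M) (a : seq A) (s t : nat) : M * seq A :=
  if s == 0%N then (ra m (nth 0 a t.-1), rem_at a t.-1)
  else if t == 0%N then (la (nth 0 a s.-1) m, rem_at a s.-1)
  else (m, rem_at (set_nth 0 a (minn s t).-1 (nth 0 a s.-1 * nth 0 a t.-1))
                  (maxn s t).-1).

Variable T : tensor_powers.

Definition F (H : {set 'I_ne}) : lmodType R := tp T (kdeg H).

Definition covers (H H' : {set 'I_ne}) : bool :=
  (H \subset H') && (#|H' :\: H| == 1)%N.

(* the map d_{H < H'} (hat = false) or \hat d_{H < H'} (hat = true) *)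
Definition dmap (hat : bool) (H H' : {set 'I_ne}) : F H -> F H' :=
  match [pick e in H' :\: H] with
  | Some e =>
      if conn H (src e) (tgt e) then
        (if hat then (fun _ => 0)
         else @tp_lift T (kdeg H) _ (fun m a => @tp_pure T (kdeg H') m a))
      else @tp_lift T (kdeg H) _
             (fun m a => let ma := merge m a (cidx H (src e)) (cidx H (tgt e)) in
                         @tp_pure T (kdeg H') ma.1 ma.2)
  | None => fun _ => 0
  end.

Definition zsign (H H' : {set 'I_ne}) : R :=
  match [pick e in H' :\: H] with
  | Some e => (-1) ^+ #|[set f in H | (f < e)%N]|
  | None => 0
  end.

Definition cochains := forall H : {set 'I_ne}, F H.

(* the complex built on the spanning subgraphs satisfying P
   (P = predT: chromatic complexes; P = multipath: multipath complex) *)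
Definition graph_complex (P : pred {set 'I_ne}) (hat : bool) : complex :=
  @Complex cochains (fun H => 0)
    (fun x y H => x H + y H)
    (fun r x H => r *: x H)
    (fun i x => forall H, ~~ (P H && (#|H| == i)) -> x H = 0)
    (fun x H' => if P H' then
                   \sum_(H | covers H H') zsign H H' *: @dmap hat H H' (x H)
                 else 0).

End Defs.

(* The linear graph I_n and the polygon P_n: vertices v_0..v_n = 'I_n.+1 *)
Definition I_src (n : nat) (e : 'I_n) : 'I_n.+1 := inord e.
Definition I_tgt (n : nat) (e : 'I_n) : 'I_n.+1 := inord e.+1.
Definition P_src (n : nat) (e : 'I_n.+1) : 'I_n.+1 := e.
Definition P_tgt (n : nat) (e : 'I_n.+1) : 'I_n.+1 :=
  inord (if (e == n :> nat) then 0%N else e.+1).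

Definition chrom_complex R A M (n ne : nat) (src tgt : 'I_ne -> 'I_n.+1)
  la ra T (hat : bool) :=
  @graph_complex R A M n.+1 ne src tgt la ra T predT hat.
Definition multipath_complex R A M (n ne : nat) (src tgt : 'I_ne -> 'I_n.+1)
  la ra T :=
  @graph_complex R A M n.+1 ne src tgt la ra T (@multipath n.+1 ne src tgt) false.

From Pilot Require Import Defs.
From HB Require Import structures.
From mathcomp Require Import all_boot all_order all_algebra zify.
From Stdlib Require Import FunctionalExtensionality.

(* For I_n every spanning subgraph is a forest whose vertices have in- and
   out-degree at most one, i.e. a multipath, and adding an edge always joins
   two different components.  So the three complexes have the same cochains
   and the same nonzero components of the differential, and the identity is
   an isomorphism.  For P_n the multipaths are exactly the proper spanning
   subgraphs, and adding an edge to H still joins two components unless the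
   result is P_n itself, where the edge closes the cycle and \hat d vanishes.
   As P_n is connected, F(P_n) = M, so \hat C(P_n) is the multipath complex
   plus a copy of M in degree n+1 that receives only zero maps. *)

Set Implicit Arguments.
Unset Strict Implicit.
Unset Printing Implicit Defensive.
Import GRing.Theory.

Section Components.
Variables (nv ne : nat) (src tgt : 'I_ne -> 'I_nv).
Local Notation conn := (conn src tgt).
Local Notation isroot := (isroot src tgt).
Local Notation ncomp := (ncomp src tgt).
Implicit Types (H : {set 'I_ne}) (e : 'I_ne) (r u v x y : 'I_nv).

Lemma adj_sym H : symmetric (adj src tgt H).
Proof. by move=> x y; apply/existsP/existsP => -[f]; exists f; rewrite orbC. Qed.

Lemma connC H x y : conn H x y = conn H y x.
Proof. exact: (sym_connect_sym (@adj_sym H)). Qed.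

Lemma conn_refl H x : conn H x x.
Proof. exact: connect0. Qed.

Lemma conn_trans H x y z : conn H x y -> conn H y z -> conn H x z.
Proof. exact: connect_trans. Qed.

Lemma conn_edge H e : e \in H -> conn H (src e) (tgt e).
Proof. by move=> eH; apply/connect1/existsP; exists e; rewrite eH !eqxx. Qed.

Lemma conn_subset H H' x y : H \subset H' -> conn H x y -> conn H' x y.
Proof.
move=> sHH'; apply: connect_sub => u v /existsP[f /andP[fH uv]].
by apply/connect1/existsP; exists f; rewrite (subsetP sHH' _ fH).
Qed.

Lemma conn_setU1 H e x y : conn (e |: H) x y ->
  [|| conn H x y, conn H x (src e) && conn H (tgt e) y
    | conn H x (tgt e) && conn H (src e) y].
Proof.
pose reach := [pred z | [|| conn H x z, conn H x (src e) && conn H (tgt e) z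
                          | conn H x (tgt e) && conn H (src e) z]].
suff reach_closed : closed (adj src tgt (e |: H)) reach.
  by move=> /(closed_connect reach_closed); rewrite !inE conn_refl /= => <-.
have conn_r v w z : conn H w z -> conn H v w = conn H v z.
  move=> wz; apply/idP/idP => [vw|vz]; first exact: conn_trans vw wz.
  by apply: conn_trans vz _; rewrite connC.
move=> u v /existsP[f /andP[]]; rewrite in_setU1 => /orP[/eqP->|fH] uv.
  by case/orP: uv => /andP[/eqP<- /eqP<-]; rewrite !inE !conn_refl;
     case: (conn H x (src e)); case: (conn H x (tgt e)).
suff uv' : conn H u v by rewrite !inE !(conn_r _ _ _ uv').
by case/orP: uv => /andP[/eqP<- /eqP<-]; rewrite ?[conn H (tgt f) _]connC conn_edge.
Qed.

Lemma root_min H r u : isroot H r -> conn H u r -> (r <= u)%N.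
Proof. by move=> /forallP/(_ u)/implyP. Qed.

Lemma exists_root H v : exists2 r, isroot H r & conn H r v.
Proof.
case: (@arg_minnP _ v (conn H ^~ v) val (conn_refl H v)) => r rv r_min.
exists r => //; apply/forallP => u; apply/implyP => ur.
exact/r_min/(conn_trans ur rv).
Qed.

Lemma root_inj H r1 r2 : isroot H r1 -> isroot H r2 -> conn H r1 r2 -> r1 = r2.
Proof.
move=> root1 root2 c12; apply/val_inj/eqP; rewrite eqn_leq.
by rewrite (root_min root2 c12) (root_min root1) // connC.
Qed.

Lemma isroot_subset H H' v : H \subset H' -> isroot H' v -> isroot H v.
Proof.
move=> sHH' rootv; apply/forallP => u; apply/implyP => uv.
exact/(root_min rootv)/(conn_subset sHH').
Qed.

Lemma ncomp_set0 : ncomp set0 = nv.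
Proof.
rewrite /ncomp (_ : [set v | isroot set0 v] = setT) ?cardsT ?card_ord //.
apply/setP => v; rewrite !inE; apply/forallP => u; apply/implyP.
have u_closed : closed (adj src tgt set0) (pred1 u) by move=> ? ? /existsP[f]; rewrite inE.
by move=> /(closed_connect u_closed); rewrite inE eqxx => /esym/eqP->.
Qed.

Lemma ncomp_setU1 H e : ~~ conn H (src e) (tgt e) -> ncomp H = (ncomp (e |: H)).+1.
Proof.
move=> bridge; have sHeH := subsetUr [set e] H.
have [r1 root1 r1s] := exists_root H (src e).
have [r2 root2 r2t] := exists_root H (tgt e).
have r12 : r1 != r2.
  by apply: contraNneq bridge => r12; rewrite connC in r1s; rewrite -r12 in r2t;
     exact: conn_trans r1s r2t.
have c12 : conn (e |: H) r1 r2.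
  apply: (conn_trans (conn_subset sHeH r1s)); rewrite connC.
  apply: (conn_trans (conn_subset sHeH r2t)); rewrite connC.
  by apply: conn_edge; rewrite setU11.
(* merging the two components deletes the larger of their two roots *)
pose m := if (r1 < r2)%N then r2 else r1.
have min_le v : v \in [:: r1; r2] -> v != m -> (v <= r1)%N && (v <= r2)%N.
  move: r12; rewrite /m !inE -val_eqE.
  by case: ltnP => lt12 ne12 /orP[] /eqP->; rewrite -val_eqE /=; lia.
rewrite /ncomp; suff -> : [set v | isroot (e |: H) v] = [set v | isroot H v] :\ m.
  have rootm : isroot H m by rewrite /m; case: ifP.
  by rewrite [in LHS](cardsD1 m) inE rootm.
apply/setP => v; rewrite !inE; apply/idP/andP => [rootv | [vm rootv]].
  split; last exact: isroot_subset sHeH rootv.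
  apply: contra_neq r12 => vm.
  have [c1 c2] : conn (e |: H) r1 v /\ conn (e |: H) r2 v.
    by rewrite vm /m; case: ifP; rewrite conn_refl // connC.
  have le1 := root_min rootv c1; have le2 := root_min rootv c2.
  by apply/val_inj/eqP => /=; move: vm le1 le2; rewrite /m; case: ifP => lt12 ->; lia.
apply/forallP => u; apply/implyP => /conn_setU1 /or3P[uv|/andP[us tv]|/andP[ut sv]].
- exact: root_min rootv uv.
- have vr2 : v = r2 by apply: root_inj rootv root2 _; rewrite connC (conn_trans r2t).
  have /andP[v_le _] : (v <= r1)%N && (v <= r2)%N.
    by apply: min_le vm; rewrite vr2 !inE eqxx orbT.
  by apply: leq_trans v_le (root_min root1 _); rewrite connC in r1s; apply: conn_trans us r1s.
- have vr1 : v = r1 by apply: root_inj rootv root1 _; rewrite connC (conn_trans r1s).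
  have /andP[_ v_le] : (v <= r1)%N && (v <= r2)%N.
    by apply: min_le vm; rewrite vr1 !inE eqxx.
  by apply: leq_trans v_le (root_min root2 _); rewrite connC in r2t; apply: conn_trans ut r2t.
Qed.

Definition acyclic H := forall e, e \in H -> ~~ conn (H :\ e) (src e) (tgt e).

Lemma acyclic_setD1 H e : acyclic H -> acyclic (H :\ e).
Proof.
move=> acycH f /setD1P[_ fH]; apply: contra (acycH f fH).
exact/conn_subset/setSD/subD1set.
Qed.

Lemma card_acyclic H : acyclic H -> (#|H| + ncomp H)%N = nv.
Proof.
elim: {H}#|H| {-2}H (erefl #|H|) => [|k IH] H cardH acycH.
  by move/eqP: cardH; rewrite cards_eq0 => /eqP->; rewrite cards0 ncomp_set0.
have [e eH] : exists e, e \in H by apply/set0Pn; rewrite -card_gt0 cardH.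
rewrite (cardsD1 e H) eH add1n in cardH; case: cardH => cardHe.
apply: etrans (IH _ cardHe (acyclic_setD1 acycH)).
by rewrite [in LHS](cardsD1 e H) eH (ncomp_setU1 (acycH e eH)) setD1K // addnS.
Qed.

Lemma card_fiber_le1 (g : 'I_ne -> 'I_nv) H v :
  injective g -> (#|[set e in H | g e == v]| <= 1)%N.
Proof.
move=> g_inj; apply/card_le1_eqP => e f; rewrite !inE.
by move=> /andP[_ /eqP ge] /andP[_ /eqP gf]; apply: g_inj; rewrite ge gf.
Qed.

Lemma multipath_inj H : injective src -> injective tgt ->
  multipath src tgt H = (#|H| + ncomp H == nv)%N.
Proof.
move=> src_inj tgt_inj; apply/and3P/idP => [[] // | forest].
by split=> //; apply/forallP => v; apply: card_fiber_le1.
Qed.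

Lemma covers_proper H H' : covers H H' -> H \proper H'.
Proof. by case/andP=> sHH' /eqP; rewrite properEcard sHH' cardsDS //; lia. Qed.

Lemma covers_neqT H H' : covers H H' -> H != setT.
Proof. by rewrite -properT => /covers_proper/proper_sub_trans; apply. Qed.

Definition adds_bridge H H' := forall e, e \in H' :\: H -> ~~ conn H (src e) (tgt e).

Definition closes_cycle H H' := forall e, e \in H' :\: H -> conn H (src e) (tgt e).
End Components.

Section LinearGraph.
Variable n : nat.
Local Notation src := (@I_src n).
Local Notation tgt := (@I_tgt n).
Implicit Types (H : {set 'I_n}) (e : 'I_n).

Lemma I_src_val e : src e = e :> nat.
Proof. by rewrite inordK // leqW. Qed.

Lemma I_tgt_val e : tgt e = e.+1 :> nat.
Proof. by rewrite /I_tgt inordK // ltnS. Qed.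

Lemma I_bridge H e : e \notin H -> ~~ conn src tgt H (src e) (tgt e).
Proof.
move=> eNH; pose below := [pred v : 'I_n.+1 | (v <= e)%N].
have below_closed : closed (adj src tgt H) below.
  move=> x y /existsP[f /andP[fH xy]].
  have fe : f != e by apply: contraNneq eNH => <-.
  rewrite -val_eqE /= in fe.
  by case/orP: xy => /andP[/eqP<- /eqP<-]; rewrite !inE I_src_val I_tgt_val;
     apply/idP/idP; lia.
apply/negP => /(closed_connect below_closed).
by rewrite !inE I_src_val I_tgt_val leqnn ltnn.
Qed.

Lemma I_multipath H : multipath src tgt H.
Proof.
rewrite multipath_inj ?card_acyclic // => [e eH | e f | e f].
- by apply: I_bridge; rewrite !inE eqxx.
- by move=> /(congr1 val); rewrite /= !I_src_val => /val_inj.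
- by move=> /(congr1 val); rewrite /= !I_tgt_val => -[/val_inj].
Qed.

Lemma I_adds_bridge H H' : adds_bridge src tgt H H'.
Proof. by move=> e /setDP[_ eNH]; apply: I_bridge. Qed.
End LinearGraph.

Section CycleGraph.
Variable n : nat.
Local Notation src := (@P_src n).
Local Notation tgt := (@P_tgt n).
Local Notation conn := (conn src tgt).
Implicit Types (H : {set 'I_n.+1}) (e f : 'I_n.+1).

Lemma P_tgt_val e : tgt e = (if e == n :> nat then 0 else e.+1)%N :> nat.
Proof. by rewrite inordK //; case: eqP => // /eqP; have := ltn_ord e; lia. Qed.

Lemma P_tgt_inord b : (b < n)%N -> tgt (inord b) = inord b.+1.
Proof.
by move=> bn; apply/val_inj; rewrite /= P_tgt_val !inordK; [case: eqP; lia | lia..].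
Qed.

Lemma P_path H a b : (a <= b <= n)%N ->
  (forall e, (a <= e < b)%N -> e \in H) -> conn H (inord a) (inord b).
Proof.
elim: b => [|b IH] /andP[ab bn] path_in.
  by move: ab; rewrite leqn0 => /eqP->; apply: conn_refl.
case: (ltngtP a b.+1) ab => // [lt_ab | ->] _; last exact: conn_refl.
apply: (conn_trans (IH _ _)) => [| e /andP[ae eb] |]; first by rewrite -ltnS lt_ab ltnW.
  by apply: path_in; rewrite ae ltnW.
have b_in : inord b \in H by apply: path_in; rewrite inordK; lia.
by rewrite -P_tgt_inord //; apply: conn_edge b_in.
Qed.

Lemma P_bridge H e f : e \notin H -> f \notin H -> f != e -> ~~ conn H (src e) (tgt e).
Proof.
move=> eNH fNH; rewrite -val_eqE /= => fe.
have e_lt := ltn_ord e; have f_lt := ltn_ord f.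
(* the arc strictly between the two missing edges is a union of components *)
pose arc := [pred v : 'I_n.+1 | (minn e f < v <= maxn e f)%N].
have arc_closed : closed (adj src tgt H) arc.
  move=> x y /existsP[g /andP[gH xy]]; have g_lt := ltn_ord g.
  have ge : g != e by apply: contraNneq eNH => <-.
  have gf : g != f by apply: contraNneq fNH => <-.
  rewrite -!val_eqE /= in ge gf.
  by case/orP: xy => /andP[/eqP<- /eqP<-]; rewrite !inE /P_src P_tgt_val;
     case: eqP => g_n; apply/idP/idP; lia.
apply/negP => /(closed_connect arc_closed); rewrite !inE /P_src P_tgt_val.
by case: eqP; lia.
Qed.

Lemma P_cycle H e : (forall f, f != e -> f \in H) -> conn H (src e) (tgt e).
Proof.
move=> others_in; have e_lt := ltn_ord e.
have path_avoiding a b : (a <= b <= n)%N -> (e < a)%N || (b <= e)%N ->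
    conn H (inord a) (inord b).
  move=> ab avoid; apply: P_path => // f /andP[af fb].
  by apply: others_in; rewrite -val_eqE /=; lia.
rewrite connC -[src e](inord_val e).
case: (e =P n :> nat) => [e_n | e_ne].
  have -> : tgt e = inord 0 by apply/val_inj; rewrite /= P_tgt_val e_n eqxx inordK.
  by rewrite e_n; apply: path_avoiding; lia.
have -> : tgt e = inord e.+1 by rewrite -P_tgt_inord ?inord_val //; lia.
(* go around the cycle the other way, through the edge from v_n to v_0 *)
apply: (conn_trans (path_avoiding e.+1 n _ _)); [lia | lia |].
have n_in : ord_max \in H by apply: others_in; rewrite -val_eqE /=; lia.
have -> : inord n = src ord_max by apply/val_inj; rewrite /= inordK.
apply: (conn_trans (conn_edge src tgt n_in)); rewrite /P_tgt /= eqxx.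
by apply: path_avoiding; lia.
Qed.

Lemma P_ncomp_setT : ncomp src tgt setT = 1%N.
Proof.
rewrite /ncomp (_ : [set v | isroot src tgt setT v] = [set ord0]) ?cards1 //.
apply/setP => v; rewrite !inE; apply/idP/eqP => [root_v | ->]; last first.
  by apply/forallP => u; apply/implyP.
have : conn setT (inord 0) (inord v).
  by apply: P_path => [|f _]; rewrite ?inE //; have := ltn_ord v; lia.
by rewrite inord_val => /(root_min root_v); rewrite inordK // leqn0 => /eqP v0; apply/val_inj.
Qed.

Lemma P_multipath H : multipath src tgt H = (H != setT).
Proof.
rewrite multipath_inj => [|e f // | e f]; last first.
  move=> /(congr1 val); rewrite /= !P_tgt_val => tgt_ef; apply/val_inj => /=.
  by have := ltn_ord e; have := ltn_ord f; move: tgt_ef; case: eqP; case: eqP; lia.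
case: (H =P setT) => [-> | /eqP HnT] /=.
  by apply/negbTE; rewrite cardsT card_ord P_ncomp_setT; lia.
apply/eqP/card_acyclic => e eH.
have /subsetPn[f _ fNH] : ~~ (setT \subset H) by rewrite subTset.
apply: (@P_bridge _ _ f); rewrite ?inE ?eqxx ?(negbTE fNH) ?andbF //.
by apply: contraNneq fNH => ->.
Qed.

Lemma P_adds_bridge H H' : covers H H' -> H' != setT -> adds_bridge src tgt H H'.
Proof.
move=> /andP[sHH' _] H'nT e /setDP[eH' eNH].
have /subsetPn[f _ fNH'] : ~~ (setT \subset H') by rewrite subTset.
apply: (@P_bridge _ _ f) => //; first exact: contra (subsetP sHH' f) fNH'.
by apply: contraNneq fNH' => ->.
Qed.

Lemma P_closes_cycle H : covers H setT -> closes_cycle src tgt H setT.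
Proof.
move=> /andP[_ /eqP card1] e e_out; apply: P_cycle => f; apply: contraNT => fNH.
have /card_le1_eqP/(_ f e) -> // : (#|setT :\: H| <= 1)%N by rewrite card1.
by rewrite !inE fNH.
Qed.
End CycleGraph.

Local Open Scope ring_scope.

Section LinearMaps.
Variables (R : comPzRingType) (U V : lmodType R) (f : U -> V).
Hypothesis f_lin : rlinear f.

Lemma rlinearD x y : f (x + y) = f x + f y.
Proof. by have := f_lin 1 x y; rewrite !scale1r. Qed.

Lemma rlinear0 : f 0 = 0.
Proof. by apply: (addrI (f 0)); rewrite -rlinearD !addr0. Qed.

Lemma rlinearZ r x : f (r *: x) = r *: f x.
Proof. by have := f_lin r x 0; rewrite !addr0 rlinear0 addr0. Qed.
End LinearMaps.

Section DegreeZero.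
Variables (R : comPzRingType) (A : algType R) (M : lmodType R).
Variables (T : tensor_powers A M) (k : nat).
Hypotheses (T_tensor : is_tensor_powers T) (k0 : k = 0%N).

Definition pure0 (m : M) : tp T k := tp_pure T k m [::].
Definition unpure0 : tp T k -> M := tp_lift (fun (m : M) (_ : seq A) => m).

Lemma pure0_rlinear : rlinear pure0.
Proof. by case: (T_tensor k) => [[pure_lin _] _] r; apply: pure_lin; rewrite k0. Qed.

Lemma multilinear_fst : multilinear k (fun (m : M) (_ : seq A) => m).
Proof. by split=> // m a j _; rewrite k0. Qed.

Lemma unpure0_rlinear : rlinear unpure0.
Proof. by case: (T_tensor k) => _ [/(_ M _ multilinear_fst) []]. Qed.

Lemma pure0K : cancel pure0 unpure0.
Proof.
case: (T_tensor k) => _ [/(_ M _ multilinear_fst) [_ lift_pure] _] m.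
by rewrite /unpure0 lift_pure ?k0.
Qed.

Lemma unpure0K : cancel unpure0 pure0.
Proof.
case: (T_tensor k) => _ [_ tensor_ext] y.
suff /(congr1 (@^~ y)) : pure0 \o unpure0 = id by [].
apply: tensor_ext => [r x z | | m a].
- by rewrite /= unpure0_rlinear pure0_rlinear.
- by [].
- move=> size_a; have -> : a = [::] by apply: size0nil; rewrite size_a k0.
  by rewrite /= -[tp_pure T k m [::]]/(pure0 m) pure0K.
Qed.
End DegreeZero.

Section GraphComplexes.
Variables (R : comPzRingType) (A : algType R) (M : lmodType R).
Variables (la : A -> M -> M) (ra : M -> A -> M) (T : tensor_powers A M).
Variables (nv ne : nat) (src tgt : 'I_ne -> 'I_nv).
Local Notation dmap hat H H' := (@dmap R A M nv ne src tgt la ra T hat H H').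
Local Notation graph_complex := (graph_complex src tgt la ra T).
Local Notation adds_bridge := (adds_bridge src tgt).
Local Notation closes_cycle := (closes_cycle src tgt).
Implicit Types (H : {set 'I_ne}) (e : 'I_ne).

Lemma dmap_bridge hat1 hat2 H H' : adds_bridge H H' -> dmap hat1 H H' =1 dmap hat2 H H'.
Proof. by move=> bridge; rewrite /Defs.dmap; case: pickP => // e /bridge/negbTE->. Qed.

Lemma dmap_cycle H H' : closes_cycle H H' -> dmap true H H' =1 fun=> 0.
Proof. by move=> cycle x; rewrite /Defs.dmap; case: pickP => // e /cycle->. Qed.

Lemma graph_complex_iso (P1 P2 : pred {set 'I_ne}) hat1 hat2 : P1 =1 P2 ->
  (forall H H', covers H H' -> P2 H' -> adds_bridge H H') ->
  cplx_iso (graph_complex P1 hat1) (graph_complex P2 hat2).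
Proof.
move=> P12 bridge; exists (fun _ x => x) => i; do !split => //=.
- by move=> x x_i H; rewrite -P12; apply: x_i.
- by move=> y y_i; exists y => // H; rewrite P12; apply: y_i.
- move=> x _; apply: functional_extensionality_dep => H'.
  rewrite P12; case: ifP => // P2H'; apply: eq_bigr => H cov.
  by rewrite (@dmap_bridge hat1 hat2 _ _ (bridge _ _ cov P2H')).
Qed.

Section AdjoinTop.
Hypothesis T_tensor : is_tensor_powers T.
Variable P : pred {set 'I_ne}.
Hypothesis P_proper : forall H, P H = (H != setT).
Hypothesis bridge_proper : forall H H', covers H H' -> H' != setT -> adds_bridge H H'.
Hypothesis cycle_top : forall H, covers H setT -> closes_cycle H setT.
Hypothesis kdeg_top : kdeg src tgt setT = 0%N.

(* [pure0] at degree [kdeg H] is only used for H = setT, where that degree is 0 *)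
Definition adjoin_top (x : cochains src tgt T) (m : M) : cochains src tgt T :=
  fun H => x H + (if H == setT then pure0 T (kdeg src tgt H) m else 0).

Lemma adjoin_top_diff (x : cochains src tgt T) (m : M) :
  adjoin_top (@cdiff _ (graph_complex P false) x) 0
  = @cdiff _ (graph_complex predT true) (adjoin_top x m).
Proof.
apply: functional_extensionality_dep => H'; rewrite /adjoin_top /=.
have -> : (if H' == setT then pure0 T (kdeg src tgt H') 0 else 0) = 0.
  by case: eqP => // ->; rewrite (rlinear0 (pure0_rlinear T_tensor kdeg_top)).
under [in RHS]eq_bigr => H cov do rewrite (negbTE (covers_neqT cov)) addr0.
rewrite addr0 P_proper; case: eqP => [-> | /eqP proper'] /=.
  by rewrite big1 // => H cov; rewrite dmap_cycle ?scaler0 //; apply: cycle_top.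
apply: eq_bigr => H cov.
by rewrite (@dmap_bridge false true _ _ (bridge_proper cov proper')).
Qed.

Lemma adjoin_top_iso :
  cplx_iso (csum (graph_complex P false) (conc M ne)) (graph_complex predT true).
Proof.
have card_top : #|[set: 'I_ne]| = ne by rewrite cardsT card_ord.
have pure0_lin := pure0_rlinear T_tensor kdeg_top.
have x_top i (x : cochains src tgt T) : @cmem _ (graph_complex P false) i x -> x setT = 0.
  by apply; rewrite P_proper eqxx.
exists (fun _ xm => adjoin_top xm.1 xm.2) => i; do !split.
- move=> [x m] [/= x_i m_i] H; rewrite /adjoin_top /=.
  case: (H =P setT) => [-> | /eqP HnT] H_i; last by rewrite addr0 x_i ?P_proper ?HnT.
  rewrite (x_top _ _ x_i) m_i ?(rlinear0 pure0_lin) ?addr0 // => ine.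
  by rewrite card_top ine eqxx in H_i.
- move=> [x1 m1] [x2 m2] _ _; apply: functional_extensionality_dep => H /=.
  rewrite /adjoin_top; case: eqP => [-> | _]; last by rewrite !addr0.
  by rewrite (rlinearD pure0_lin) addrACA.
- move=> r [x m] _; apply: functional_extensionality_dep => H /=.
  rewrite /adjoin_top; case: eqP => [-> | _]; last by rewrite !addr0.
  by rewrite (rlinearZ pure0_lin) scalerDr.
- move=> [x1 m1] [x2 m2] [/= x1_i _] [/= x2_i _] eq12.
  have eq_at H := congr1 (@^~ H) eq12; rewrite /adjoin_top /= in eq_at.
  have m12 : m1 = m2.
    by apply: (can_inj (pure0K T_tensor kdeg_top)); have := eq_at setT;
       rewrite eqxx (x_top _ _ x1_i) (x_top _ _ x2_i) !add0r.
  congr pair => //; apply: functional_extensionality_dep => H.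
  case: (H =P setT) => [-> | /eqP HnT]; first by rewrite (x_top _ _ x1_i) (x_top _ _ x2_i).
  by have := eq_at H; rewrite (negbTE HnT) !addr0.
- move=> y y_i; exists ((fun H => if H == setT then 0 else y H), unpure0 (y setT)).
    split=> [H /= | /= ine].
      by case: (H =P setT) => // /eqP HnT; rewrite P_proper HnT => /y_i.
    by rewrite y_i ?(rlinear0 (unpure0_rlinear T_tensor kdeg_top)) //= card_top; apply/eqP => /esym.
  apply: functional_extensionality_dep => H; rewrite /adjoin_top /=.
  by case: eqP => [-> | _]; rewrite ?add0r ?addr0 ?(unpure0K T_tensor kdeg_top).
- by move=> [x m] _; apply: adjoin_top_diff.
Qed.
End AdjoinTop.
End GraphComplexes.

Theorem theorem6p4 (R : comPzRingType) (A : algType R) (M : lmodType R)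
  (la : A -> M -> M) (ra : M -> A -> M) (T : tensor_powers A M) (n : nat) :
  is_bimodule la ra -> is_tensor_powers T ->
  [/\ cplx_iso (multipath_complex (@I_src n) (@I_tgt n) la ra T)
               (chrom_complex (@I_src n) (@I_tgt n) la ra T true),
      cplx_iso (chrom_complex (@I_src n) (@I_tgt n) la ra T true)
               (chrom_complex (@I_src n) (@I_tgt n) la ra T false) &
      cplx_iso (csum (multipath_complex (@P_src n) (@P_tgt n) la ra T)
                     (conc M n.+1))
               (chrom_complex (@P_src n) (@P_tgt n) la ra T true)].
Proof.
(* the isomorphisms are identities on cochains *)
move=> _ T_tensor; split.
- by apply: graph_complex_iso => [H | H H' _ _]; [exact: I_multipath | exact: I_adds_bridge].
- by apply: graph_complex_iso => // H H' _ _; exact: I_adds_bridge.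
- apply: adjoin_top_iso => //; [exact: P_multipath | exact: P_adds_bridge |
                                exact: P_closes_cycle |].
  by rewrite /kdeg P_ncomp_setT.
Qed.
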